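(* Let $G$ be a group, $S$ a subgroup of $G$, and $T,U$ subsets of $G$. (i) If $(S,T,U)$ is a basic TPP triple of $G$, then $T$ and $U$ are subtransversals for $S$ in $G$ (with respect to the partition of $G$ into right cosets $S\backslash G$) such that $\operatorname{supp}_{S\backslash G}(T)\cap \operatorname{supp}_{S\backslash G}(U)=\{S\}$. (ii) If $T$ and $U$ are also subgroups of $G$, and $T$ and $U$ are subtransversals for $S$ in $G$ satisfying $\operatorname{supp}_{S\backslash G}(T)\cap \operatorname{supp}_{S\backslash G}(U)=\{S\}$, then $(S,T,U)$ is a TPP triple of $G$.
   Context: For a nonempty subset $X$ of a group $G$, $Q(X):=\{xy^{-1}: x,y\in X\}$. Nonempty subsets $S,T,U$ of $G$ form a TPP triple if for all $s\in Q(S)$, $t\in Q(T)$, $u\in Q(U)$: $stu=1$ iff $s=t=u=1$. A TPP triple is basic if $1\in S\cap T\cap U$. Let $C$ be a finite nonempty set and $\mathcal C$ a partition of $C$. A set $X\subseteq C$ is a subtransversal for $\mathcal C$ with support $\operatorname{supp}_{\mathcal C}(X)=\mathcal T\subseteq\mathcal C$ if for every block $C_i\in\mathcal C$, $|X\cap C_i|=1$ when $C_i\in\mathcal T$ and $|X\cap C_i|=0$ otherwise. For a subgroup $S$ of $G$, a subtransversal for $S$ in $G$ means a subtransversal for the partition $S\backslash G=\{Sr: r\in G\}$ of $G$ into right cosets of $S$. *)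

From mathcomp Require Import all_boot all_fingroup.
Set Implicit Arguments. Unset Strict Implicit. Unset Printing Implicit Defensive.
Local Open Scope group_scope.

Definition Qset (gT : finGroupType) (X : {set gT}) : {set gT} :=
  [set x * y^-1 | x in X, y in X].

Definition TPP_triple (gT : finGroupType) (G S T U : {set gT}) : Prop :=
  [/\ [/\ S \subset G, T \subset G & U \subset G],
      [/\ S != set0, T != set0 & U != set0] &
      forall s t u, s \in Qset S -> t \in Qset T -> u \in Qset U ->
        (s * t * u = 1 <-> [/\ s = 1, t = 1 & u = 1])].

Definition basic_TPP_triple (gT : finGroupType) (G S T U : {set gT}) : Prop :=
  TPP_triple G S T U /\ 1 \in S :&: T :&: U.

Definition subtransversal_with_support (T : finType) (P : {set {set T}})
    (X : {set T}) (Sup : {set {set T}}) : Prop :=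
  [/\ X \subset cover P, Sup \subset P &
      forall B, B \in P -> #|X :&: B| = (if B \in Sup then 1 else 0)%N].

(* For (i), a coincidence S x = S y with x, y in T yields s (x y^-1) 1 = 1 with
   s = (x y^-1)^-1 in S, so x = y by the TPP property; likewise for U, and a
   common coset S t = S u of T and U yields (u t^-1) t u^-1 = 1, forcing t = 1.
   For (ii), Q(X) = X for a subgroup X, and s t u = 1 puts t and u^-1 in the
   same coset of S; that coset lies in both supports, hence is S itself, and
   then t and u^-1 share the coset S with 1, so both equal 1. *)
From mathcomp Require Import all_boot all_fingroup.
Set Implicit Arguments. Unset Strict Implicit. Unset Printing Implicit Defensive.
Local Open Scope group_scope.

Section Qset.
Variable gT : finGroupType.
Implicit Types X : {set gT}.

Lemma mem_Qset X x y : x \in X -> y \in X -> x * y^-1 \in Qset X.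
Proof. by move=> Xx Xy; apply/imset2P; exists x y. Qed.

Lemma sub_Qset X : 1 \in X -> X \subset Qset X.
Proof. by move=> X1; apply/subsetP=> x Xx; rewrite -[x]mulg1 -invg1 mem_Qset. Qed.

Lemma Qset_group_set X : group_set X -> Qset X = X.
Proof.
move=> gX; pose H := Group gX; apply/eqP; rewrite eqEsubset sub_Qset ?(group1 H) // andbT.
by apply/subsetP=> _ /imset2P[x y Xx Xy ->]; rewrite (groupM (G := H)) ?groupV.
Qed.

End Qset.

Section Subtransversal.
Variables (T : finType) (P : {set {set T}}) (X : {set T}) (Sup : {set {set T}}).
Hypothesis trX : subtransversal_with_support P X Sup.

Lemma subtransversal_support B x : B \in P -> x \in X -> x \in B -> B \in Sup.
Proof.
case: trX => _ _ cardX PB Xx Bx; move: (cardX B PB); case: ifP => // _ /eqP.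
by rewrite cards_eq0 => /eqP/setP/(_ x); rewrite !inE Xx Bx.
Qed.

Lemma subtransversal_uniq B : B \in P -> {in X &, forall x y, x \in B -> y \in B -> x = y}.
Proof.
case: trX => _ _ cardX PB x y Xx Xy Bx By.
have : #|X :&: B| <= 1 by rewrite cardX //; case: ifP.
by move/card_le1_eqP; apply; rewrite inE ?Xx ?Xy ?Bx ?By.
Qed.

End Subtransversal.

Section RcosetSubtransversal.
Variables (gT : finGroupType) (G S : {group gT}).
Hypothesis sSG : S \subset G.

Lemma rcosets_subtransversal (X : {set gT}) : X \subset G ->
  {in X &, forall x y, x * y^-1 \in S -> x = y} ->
  subtransversal_with_support (rcosets S G) X (rcosets S X).
Proof.
move=> sXG injX; split; first by rewrite (cover_partition (rcosets_partition sSG)).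
  exact: imsetS.
move=> _ /rcosetsP[r Gr ->]; case: ifP => [/rcosetsP[x Xx ->] | notSX].
  apply/eqP/cards1P; exists x; apply/setP=> y; rewrite !inE.
  apply/andP/eqP => [[Xy] | ->]; last by rewrite Xx rcoset_refl.
  by rewrite mem_rcoset => /injX; apply.
apply/eqP; rewrite cards_eq0; apply/eqP/setP=> y; rewrite !inE.
apply/negbTE/negP=> /andP[Xy /rcoset_eqP Ery].
by move/negbT: notSX; rewrite -Ery; case/negP; apply/rcosetsP; exists y.
Qed.

Lemma subtransversal_groupIS_eq1 (X : {set gT}) Sup x :
  group_set X -> subtransversal_with_support (rcosets S G) X Sup ->
  x \in X -> x \in S -> x = 1.
Proof.
move=> gX trX Xx Sx; have PS : (S : {set gT}) \in rcosets S G.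
  by apply/rcosetsP; exists 1; rewrite ?rcoset1.
by apply: (subtransversal_uniq trX PS) => //; rewrite (group1 (Group gX)).
Qed.

End RcosetSubtransversal.

Section BasicTPP.
Variables (gT : finGroupType) (S : {group gT}) (T U : {set gT}).
Hypothesis tppSTU : forall s t u, s \in Qset S -> t \in Qset T -> u \in Qset U ->
  (s * t * u = 1 <-> [/\ s = 1, t = 1 & u = 1]).
Hypotheses (T1 : 1 \in T) (U1 : 1 \in U).

Let QS : Qset S = S := Qset_group_set (groupP S).
Let QT1 : 1 \in Qset T := subsetP (sub_Qset T1) 1 T1.
Let QU1 : 1 \in Qset U := subsetP (sub_Qset U1) 1 U1.

Lemma basic_TPP_rcoset_injl : {in T &, forall x y, x * y^-1 \in S -> x = y}.
Proof.
move=> x y Tx Ty Sxy; apply/eqP; rewrite -divg_eq1; apply/eqP.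
have QSxy : (x * y^-1)^-1 \in Qset S by rewrite QS groupV.
by have [|_ -> _] := (tppSTU QSxy (mem_Qset Tx Ty) QU1).1; rewrite ?mulVg ?mulg1.
Qed.

Lemma basic_TPP_rcoset_injr : {in U &, forall x y, x * y^-1 \in S -> x = y}.
Proof.
move=> x y Ux Uy Sxy; apply/eqP; rewrite -divg_eq1; apply/eqP.
have QSxy : (x * y^-1)^-1 \in Qset S by rewrite QS groupV.
by have [|_ _ ->] := (tppSTU QSxy QT1 (mem_Qset Ux Uy)).1; rewrite ?mulg1 ?mulVg.
Qed.

Lemma basic_TPP_common_rcoset t u : t \in T -> u \in U -> t * u^-1 \in S -> t = 1.
Proof.
move=> Tt Uu Stu.
have QSut : u * t^-1 \in Qset S by rewrite QS -[u]invgK -invMg groupV.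
have QTt : t \in Qset T by rewrite -[t]mulg1 -invg1 mem_Qset.
have QUu : u^-1 \in Qset U by rewrite -[u^-1]mul1g mem_Qset.
by have [|_ -> _] := (tppSTU QSut QTt QUu).1; rewrite ?mulgKV ?mulgV.
Qed.

End BasicTPP.

Lemma basic_TPP_subtransversals (gT : finGroupType) (G S : {group gT}) (T U : {set gT}) :
    S \subset G -> T \subset G -> U \subset G -> basic_TPP_triple G S T U ->
  [/\ subtransversal_with_support (rcosets S G) T (rcosets S T),
      subtransversal_with_support (rcosets S G) U (rcosets S U) &
      rcosets S T :&: rcosets S U = [set (S : {set gT})]].
Proof.
move=> sSG sTG sUG [[_ _ tpp]]; rewrite !inE => /andP[/andP[_ T1] U1].
split; [exact: rcosets_subtransversal (basic_TPP_rcoset_injl tpp U1) |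
        exact: rcosets_subtransversal (basic_TPP_rcoset_injr tpp T1) |].
apply/setP=> B; rewrite !inE; apply/andP/eqP => [[] | ->]; last first.
  by split; apply/rcosetsP; exists 1; rewrite ?rcoset1.
move=> /rcosetsP[t Tt ->] /rcosetsP[u Uu Etu].
have Stu : t * u^-1 \in S by rewrite -mem_rcoset -Etu rcoset_refl.
by rewrite (basic_TPP_common_rcoset tpp T1 U1 Tt Uu Stu) rcoset1.
Qed.

Lemma subtransversal_groups_TPP (gT : finGroupType) (G S : {group gT}) (T U : {set gT})
    SupT SupU : S \subset G -> T \subset G -> U \subset G ->
  group_set T -> group_set U ->
  subtransversal_with_support (rcosets S G) T SupT ->
  subtransversal_with_support (rcosets S G) U SupU ->
  SupT :&: SupU = [set (S : {set gT})] -> TPP_triple G S T U.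
Proof.
move=> sSG sTG sUG grpT grpU trT trU SupTU.
have T1 : 1 \in T := group1 (Group grpT); have U1 : 1 \in U := group1 (Group grpU).
split=> //; first by split; apply/set0Pn; exists 1.
move=> s t u; rewrite (Qset_group_set (groupP S)) (Qset_group_set grpT) (Qset_group_set grpU).
move=> Ss Tt Uu; split=> [stu | [-> -> ->]]; last by rewrite !mulg1.
have Uu' : u^-1 \in U by rewrite (groupV (Group grpU)).
have Pcoset x : x \in G -> S :* x \in rcosets S G by move=> Gx; apply/rcosetsP; exists x.
have Etu : S :* t = S :* u^-1.
  have tu : t * u = s^-1 by rewrite -(mulKg s (t * u)) [s * _]mulgA stu mulg1.
  by apply/rcoset_eqP; rewrite mem_rcoset invgK tu groupV.
have : S :* t \in SupT :&: SupU.
  rewrite inE (subtransversal_support trT (Pcoset t (subsetP sTG t Tt)) Tt) ?rcoset_refl //.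
  by rewrite Etu (subtransversal_support trU (Pcoset _ (subsetP sUG _ Uu')) Uu') ?rcoset_refl.
rewrite SupTU inE => /eqP StS.
have St : t \in S by rewrite -StS rcoset_refl.
have Su' : u^-1 \in S by rewrite -StS Etu rcoset_refl.
have t1 := subtransversal_groupIS_eq1 grpT trT Tt St.
have u1 := subtransversal_groupIS_eq1 grpU trU Uu' Su'.
by move: stu; rewrite t1 -[u]invgK u1 invg1 !mulg1 => ->.
Qed.

Theorem mainTheorem2 (gT : finGroupType) (G S : {group gT}) (T U : {set gT}) :
  S \subset G -> T \subset G -> U \subset G ->
  (* (i) *)
  (basic_TPP_triple G S T U ->
     exists SupT SupU : {set {set gT}},
       [/\ subtransversal_with_support (rcosets S G) T SupT,
           subtransversal_with_support (rcosets S G) U SupU &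
           SupT :&: SupU = [set (S : {set gT})]])
  /\
  (* (ii) *)
  (group_set T -> group_set U ->
     forall SupT SupU : {set {set gT}},
       subtransversal_with_support (rcosets S G) T SupT ->
       subtransversal_with_support (rcosets S G) U SupU ->
       SupT :&: SupU = [set (S : {set gT})] ->
     TPP_triple G S T U).
Proof.
move=> sSG sTG sUG; split=> [basic | grpT grpU SupT SupU].
  by exists (rcosets S T), (rcosets S U); apply: basic_TPP_subtransversals.
exact: subtransversal_groups_TPP.
Qed.
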